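(* Let $\theta\in(0,\pi)$, $\lambda_0=2\cos\theta$, $\sigma\in[0,1]$, $c_0\ge1$, and let $(\omega_i)_{i\ge1}$ be real numbers with $|\omega_i|\le c_0$ for all $i$. Then for all $k\ge0$, $$\frac{|X_{k+1}-X_k|}{Y_k}\le \frac{\sqrt5}{2}\,\frac{\sigma c_0^2}{\sin^2\theta}.$$
   Context: Let $z=e^{i\theta}$, $T_i=\begin{pmatrix}\lambda_0-\sigma\omega_i&-1\\1&0\end{pmatrix}$, $W_k=T_k\cdots T_1$ ($W_0=I$), and define $X_k,Y_k\in\mathbb{R}$, $Y_k>0$, by $X_k+iY_k=W_k^{-1}\circ z$, where a real $2\times2$ matrix $\begin{pmatrix}a&b\\c&d\end{pmatrix}$ of positive determinant acts on the upper half plane by $w\mapsto\frac{aw+b}{cw+d}$. *)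

From Stdlib Require Import Reals Lra.
Open Scope R_scope.

Record mat2 := Mat2 { ma : R; mb : R; mc : R; md : R }.

Definition mmul (M N : mat2) : mat2 :=
  Mat2 (ma M * ma N + mb M * mc N) (ma M * mb N + mb M * md N)
       (mc M * ma N + md M * mc N) (mc M * mb N + md M * md N).

Definition mid : mat2 := Mat2 1 0 0 1.

Definition mdet (M : mat2) : R := ma M * md M - mb M * mc M.

Definition minv (M : mat2) : mat2 :=
  let d := mdet M in Mat2 (md M / d) (- mb M / d) (- mc M / d) (ma M / d).

(* Moebius action w |-> (a w + b)/(c w + d) on w = x + i y, written on
   (real part, imaginary part) pairs. *)
Definition mact (M : mat2) (w : R * R) : R * R :=
  let (x, y) := w in
  let nr := ma M * x + mb M in let ni := ma M * y in
  let dr := mc M * x + md M in let di := mc M * y in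
  let q := dr * dr + di * di in
  ((nr * dr + ni * di) / q, (ni * dr - nr * di) / q).

Definition Tm (lam0 sigma : R) (omega : nat -> R) (i : nat) : mat2 :=
  Mat2 (lam0 - sigma * omega i) (-1) 1 0.

Fixpoint Wm (lam0 sigma : R) (omega : nat -> R) (k : nat) : mat2 :=
  match k with
  | O => mid
  | S k' => mmul (Tm lam0 sigma omega (S k')) (Wm lam0 sigma omega k')
  end.

(* X_k + i Y_k = W_k^{-1} o z, z = e^{i theta}, lambda0 = 2 cos theta. *)
Definition XY (theta sigma : R) (omega : nat -> R) (k : nat) : R * R :=
  mact (minv (Wm (2 * cos theta) sigma omega k)) (cos theta, sin theta).

Definition Xk theta sigma omega k := fst (XY theta sigma omega k).
Definition Yk theta sigma omega k := snd (XY theta sigma omega k).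

(* W_k^{-1} is a hyperbolic isometry of the upper half plane, so it preserves
   the point-pair invariant |w - w'|^2 / (Im w Im w').  Since
   X_{k+1} + i Y_{k+1} = W_k^{-1} (T_{k+1}^{-1} z) and X_k + i Y_k = W_k^{-1} z,
   the invariant of the two consecutive points equals that of T_{k+1}^{-1} z and
   z, which is (sigma omega_{k+1})^2 / sin^2 theta.  For any two points with
   invariant d one has ((X' - X) / Y)^2 <= d + d^2 / 4, and the bound follows from
   |sigma omega| <= sigma c0, sigma <= 1 <= c0 and sin theta <= 1. *)

From Stdlib Require Import Reals Lra Lia Psatz.
Open Scope R_scope.

Definition mden (M : mat2) (w : R * R) : R :=
  (mc M * fst w + md M) ^ 2 + (mc M * snd w) ^ 2.

Lemma mact_fst M x y :
  fst (mact M (x, y)) =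
  ((ma M * x + mb M) * (mc M * x + md M) + ma M * mc M * y ^ 2) / mden M (x, y).
Proof. destruct M; unfold mact, mden; simpl; f_equal; ring. Qed.

Lemma mact_snd M x y : snd (mact M (x, y)) = mdet M * y / mden M (x, y).
Proof. destruct M; unfold mact, mden, mdet; simpl; f_equal; ring. Qed.

Lemma mden_gt0 M w : snd w <> 0 -> mdet M <> 0 -> 0 < mden M w.
Proof.
  destruct M as [a b c d], w as [x y]; unfold mden, mdet; simpl; intros Hy Hdet.
  destruct (Req_dec c 0) as [->|Hc].
  - assert (Hd : d <> 0) by (intro; subst; apply Hdet; ring).
    generalize (Rsqr_pos_lt _ Hd) (pow2_ge_0 y); unfold Rsqr; lra.
  - assert (Hcy : c * y <> 0) by (apply Rmult_integral_contrapositive; tauto).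
    generalize (Rsqr_pos_lt _ Hcy) (pow2_ge_0 (c * x + d)); unfold Rsqr; lra.
Qed.

Lemma mdet_mul M N : mdet (mmul M N) = mdet M * mdet N.
Proof. destruct M, N; unfold mdet, mmul; simpl; ring. Qed.

Lemma mdet_minv M : mdet M <> 0 -> mdet (minv M) = / mdet M.
Proof. destruct M; unfold minv, mdet; simpl; intros; field; auto. Qed.

Lemma minv_mul M N : mdet M <> 0 -> mdet N <> 0 ->
  minv (mmul M N) = mmul (minv N) (minv M).
Proof.
  intros HM HN. pose proof (mdet_mul M N) as HMN.
  destruct M, N; unfold minv, mmul in *; unfold mdet in *; simpl in *.
  rewrite HMN. f_equal; field; auto.
Qed.

Lemma minv_det1 M : mdet M = 1 -> minv M = Mat2 (md M) (- mb M) (- mc M) (ma M).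
Proof. intros H. unfold minv. rewrite H. f_equal; field. Qed.

Lemma mdet_Wm lam0 sigma omega k : mdet (Wm lam0 sigma omega k) = 1.
Proof.
  induction k; simpl.
  - unfold mdet, mid; simpl; ring.
  - rewrite mdet_mul, IHk. unfold mdet, Tm; simpl; ring.
Qed.

Lemma minv_Tm lam0 sigma omega i :
  minv (Tm lam0 sigma omega i) = Mat2 0 1 (-1) (lam0 - sigma * omega i).
Proof. rewrite minv_det1 by (unfold mdet; simpl; ring). simpl. f_equal; ring. Qed.

Lemma mdet_minv_Wm lam0 sigma omega k : mdet (minv (Wm lam0 sigma omega k)) = 1.
Proof. rewrite mdet_minv, mdet_Wm; [apply Rinv_1 | rewrite mdet_Wm; lra]. Qed.

Lemma mdet_minv_Tm lam0 sigma omega i : mdet (minv (Tm lam0 sigma omega i)) = 1.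
Proof. rewrite minv_Tm. unfold mdet; simpl; ring. Qed.

Lemma mden_mact M N w : snd w <> 0 -> mdet N <> 0 ->
  mden M (mact N w) = mden (mmul M N) w / mden N w.
Proof.
  intros Hy HN. pose proof (mden_gt0 N w Hy HN) as Hq.
  destruct w as [x y].
  rewrite (surjective_pairing (mact N (x, y))), mact_fst, mact_snd.
  destruct M, N; unfold mden, mdet, mmul in *; simpl in *.
  field; lra.
Qed.

Lemma mact_mul M N w : snd w <> 0 -> mdet M <> 0 -> mdet N <> 0 ->
  mact (mmul M N) w = mact M (mact N w).
Proof.
  intros Hy HM HN. pose proof (mden_gt0 N w Hy HN) as HqN.
  assert (HMN : mdet (mmul M N) <> 0)
    by (rewrite mdet_mul; apply Rmult_integral_contrapositive; auto).
  pose proof (mden_gt0 (mmul M N) w Hy HMN) as HqMN.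
  pose proof (mden_mact M N w Hy HN) as Hq.
  destruct w as [x y].
  rewrite (surjective_pairing (mact N (x, y))) in Hq |- *.
  rewrite (surjective_pairing (mact (mmul M N) (x, y))),
    (surjective_pairing (mact M _)), (mact_fst M), (mact_snd M), Hq.
  rewrite !mact_fst, !mact_snd, mdet_mul.
  destruct M, N; unfold mden, mdet, mmul in *; simpl in *.
  f_equal; field; lra.
Qed.

Lemma mact_snd_gt0 M w : 0 < mdet M -> 0 < snd w -> 0 < snd (mact M w).
Proof.
  intros HM Hy. destruct w as [x y]. rewrite mact_snd.
  simpl in Hy. assert (Hq : 0 < mden M (x, y)) by (apply mden_gt0; simpl; lra).
  apply Rdiv_lt_0_compat; nra.
Qed.

(* [hdelta w w' = 2 (cosh d(w, w') - 1)] for the hyperbolic distance [d] on the upper half plane. *)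
Definition hdelta (w w' : R * R) : R :=
  ((fst w - fst w') ^ 2 + (snd w - snd w') ^ 2) / (snd w * snd w').

Lemma hdelta_mact M w w' : mdet M <> 0 -> snd w <> 0 -> snd w' <> 0 ->
  hdelta (mact M w) (mact M w') = hdelta w w'.
Proof.
  intros HM Hy Hy'.
  pose proof (mden_gt0 M w Hy HM). pose proof (mden_gt0 M w' Hy' HM).
  destruct w as [x y], w' as [x' y'].
  unfold hdelta. rewrite (surjective_pairing (mact M (x, y))),
    (surjective_pairing (mact M (x', y'))), !mact_fst, !mact_snd.
  destruct M; unfold mden, mdet in *; simpl in *.
  field; repeat split; lra.
Qed.

Lemma hdelta_transfer_step cs sn s : cs ^ 2 + sn ^ 2 = 1 -> sn <> 0 ->
  hdelta (mact (Mat2 0 1 (-1) (2 * cs - s)) (cs, sn)) (cs, sn) = s ^ 2 / sn ^ 2.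
Proof.
  intros Hcs Hsn.
  set (M := Mat2 0 1 (-1) (2 * cs - s)).
  set (q := (cs - s) ^ 2 + sn ^ 2).
  assert (Hq : 0 < q).
  { replace q with (mden M (cs, sn)) by (unfold q, mden; simpl; ring).
    apply mden_gt0; unfold mdet; simpl; lra. }
  assert (Hfst : fst (mact M (cs, sn)) = (cs - s) / q)
    by (rewrite mact_fst; unfold mden, q; simpl; f_equal; ring).
  assert (Hsnd : snd (mact M (cs, sn)) = sn / q)
    by (rewrite mact_snd; unfold mden, mdet, q; simpl; f_equal; ring).
  assert (Hnum : (cs - s - cs * q) ^ 2 + (sn - sn * q) ^ 2
                 = s ^ 2 * q + (cs ^ 2 + sn ^ 2 - 1) * ((1 - q) ^ 2 - (1 - q)))
    by (unfold q; ring).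
  rewrite Hcs, Rminus_diag, Rmult_0_l, Rplus_0_r in Hnum.
  unfold hdelta. rewrite Hfst, Hsnd; simpl fst; simpl snd.
  replace (((cs - s) / q - cs) ^ 2 + (sn / q - sn) ^ 2)
    with (((cs - s - cs * q) ^ 2 + (sn - sn * q) ^ 2) / q ^ 2) by (field; lra).
  rewrite Hnum. field; lra.
Qed.

Lemma horizontal_shift_sqr_le w w' : 0 < snd w -> 0 < snd w' ->
  ((fst w' - fst w) / snd w) ^ 2 <= hdelta w' w + hdelta w' w ^ 2 / 4.
Proof.
  destruct w as [x y], w' as [x' y']; unfold hdelta; cbn [fst snd]; intros Hy Hy'.
  set (d2 := (x' - x) ^ 2 + (y' - y) ^ 2).
  assert (Hsq : 4 * y' ^ 2 * (x' - x) ^ 2 + (d2 - 2 * y' * (y' - y)) ^ 2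
                = 4 * y * y' * d2 + d2 ^ 2) by (unfold d2; ring).
  pose proof (pow2_ge_0 (d2 - 2 * y' * (y' - y))).
  replace (d2 / (y' * y) + (d2 / (y' * y)) ^ 2 / 4)
    with ((4 * y * y' * d2 + d2 ^ 2) / (4 * y ^ 2 * y' ^ 2)) by (field; lra).
  replace (((x' - x) / y) ^ 2)
    with (4 * y' ^ 2 * (x' - x) ^ 2 / (4 * y ^ 2 * y' ^ 2)) by (field; lra).
  apply Rmult_le_compat_r; [| lra].
  apply Rlt_le, Rinv_0_lt_compat.
  assert (0 < y * y') by nra. nra.
Qed.

Lemma Rabs_div_le_of_sqr_le a y b : 0 < y -> 0 <= b -> (a / y) ^ 2 <= b ^ 2 ->
  Rabs a / y <= b.
Proof.
  intros Hy Hb Hab.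
  replace (Rabs a / y) with (Rabs (a / y))
    by (unfold Rdiv; rewrite Rabs_mult, Rabs_inv, (Rabs_pos_eq y); lra).
  rewrite <- (Rabs_pos_eq b Hb).
  apply Rsqr_le_abs_0. rewrite !Rsqr_pow2. exact Hab.
Qed.

Lemma transfer_gap_bound sigma c0 om sn :
  0 <= sigma <= 1 -> 1 <= c0 -> Rabs om <= c0 -> 0 < sn ^ 2 <= 1 ->
  (sigma * om) ^ 2 / sn ^ 2 + ((sigma * om) ^ 2 / sn ^ 2) ^ 2 / 4
  <= (sqrt 5 / 2 * (sigma * c0 ^ 2 / sn ^ 2)) ^ 2.
Proof.
  intros Hsigma Hc0 Hom Hsn.
  assert (Hsn0 : sn <> 0) by (intro; subst; simpl in Hsn; lra).
  set (t := / sn ^ 2).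
  assert (Ht : 1 <= t) by (unfold t; rewrite <- Rinv_1; apply Rinv_le_contravar; lra).
  set (p := (sigma * om) ^ 2).
  set (m := sigma ^ 2 * c0 ^ 4).
  assert (Hom2 : om ^ 2 <= c0 ^ 2)
    by (rewrite <- (pow2_abs om); apply pow_incr; split; [apply Rabs_pos | lra]).
  assert (Hp : 0 <= p <= sigma ^ 2 * c0 ^ 2)
    by (unfold p; rewrite Rpow_mult_distr; split; [apply Rmult_le_pos; apply pow2_ge_0 | nra]).
  assert (Hc2 : 1 <= c0 ^ 2) by nra.
  assert (Hs2 : 0 <= sigma ^ 2 <= 1) by (split; nra).
  assert (Hpm : p <= m).
  { unfold m. replace (c0 ^ 4) with (c0 ^ 2 * c0 ^ 2) by ring. nra. }
  assert (Hp2m : p ^ 2 <= m).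
  { unfold m. replace (c0 ^ 4) with (c0 ^ 2 * c0 ^ 2) by ring.
    apply Rle_trans with ((sigma ^ 2 * c0 ^ 2) ^ 2); [apply pow_incr; lra | nra]. }
  assert (H5 : sqrt 5 ^ 2 = 5) by (simpl; rewrite Rmult_1_r; apply sqrt_sqrt; lra).
  replace ((sqrt 5 / 2 * (sigma * c0 ^ 2 / sn ^ 2)) ^ 2)
    with (sqrt 5 ^ 2 / 4 * (sigma * c0 ^ 2 / sn ^ 2) ^ 2) by (field; auto).
  rewrite H5.
  replace (5 / 4 * (sigma * c0 ^ 2 / sn ^ 2) ^ 2) with (5 / 4 * m * t ^ 2)
    by (unfold m, t; field; auto).
  unfold Rdiv. fold t. fold p.
  assert (H1 : p * t <= m * t ^ 2).
  { apply Rle_trans with (m * t); [apply Rmult_le_compat_r; lra |].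
    apply Rmult_le_compat_l; [lra | nra]. }
  assert (H2 : (p * t) ^ 2 <= m * t ^ 2).
  { rewrite Rpow_mult_distr. apply Rmult_le_compat_r; [apply pow2_ge_0 | lra]. }
  lra.
Qed.

Lemma Yk_gt0 theta sigma omega k : 0 < sin theta -> 0 < Yk theta sigma omega k.
Proof.
  intros Hsn. apply mact_snd_gt0; [rewrite mdet_minv_Wm | simpl]; lra.
Qed.

Lemma XY_succ theta sigma omega k : sin theta <> 0 ->
  XY theta sigma omega (S k) =
  mact (minv (Wm (2 * cos theta) sigma omega k))
       (mact (minv (Tm (2 * cos theta) sigma omega (S k))) (cos theta, sin theta)).
Proof.
  intros Hsn. unfold XY. cbn [Wm].
  rewrite minv_mul, mact_mul; try reflexivity;
    rewrite ?mdet_minv_Wm, ?mdet_minv_Tm, ?mdet_Wm; try (simpl; lra).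
  unfold mdet; simpl; lra.
Qed.

Lemma hdelta_XY_succ theta sigma omega k : 0 < sin theta ->
  hdelta (XY theta sigma omega (S k)) (XY theta sigma omega k)
  = (sigma * omega (S k)) ^ 2 / sin theta ^ 2.
Proof.
  intros Hsn. rewrite XY_succ by lra. unfold XY.
  assert (Hy : 0 < snd (mact (minv (Tm (2 * cos theta) sigma omega (S k)))
                             (cos theta, sin theta)))
    by (apply mact_snd_gt0; [rewrite mdet_minv_Tm | simpl]; lra).
  rewrite hdelta_mact by (rewrite ?mdet_minv_Wm; simpl in *; lra).
  rewrite minv_Tm. apply hdelta_transfer_step; [| lra].
  rewrite Rplus_comm, <- !Rsqr_pow2. apply sin2_cos2.
Qed.

Theorem mainTheorem4 (theta sigma c0 : R) (omega : nat -> R)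
  (Htheta : 0 < theta < PI) (Hsigma : 0 <= sigma <= 1) (Hc0 : 1 <= c0)
  (Homega : forall i : nat, (1 <= i)%nat -> Rabs (omega i) <= c0) :
  forall k : nat,
    Rabs (Xk theta sigma omega (S k) - Xk theta sigma omega k)
      / Yk theta sigma omega k
    <= sqrt 5 / 2 * (sigma * c0 ^ 2 / (sin theta) ^ 2).
Proof.
  intros k.
  assert (Hsn : 0 < sin theta) by (apply sin_gt_0; lra).
  assert (Hsn2 : 0 < sin theta ^ 2 <= 1)
    by (split; [apply pow_lt; lra | pose proof (SIN_bound theta); nra]).
  apply Rabs_div_le_of_sqr_le; [apply Yk_gt0, Hsn | |].
  - apply Rmult_le_pos; [pose proof (sqrt_pos 5); lra |].
    apply Rmult_le_pos; [apply Rmult_le_pos; [lra | apply pow_le; lra] |].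
    apply Rlt_le, Rinv_0_lt_compat; lra.
  - eapply Rle_trans; [apply horizontal_shift_sqr_le; apply Yk_gt0, Hsn |].
    rewrite hdelta_XY_succ by exact Hsn.
    apply transfer_gap_bound; [lra | lra | apply Homega; lia | exact Hsn2].
Qed.
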